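(* Let $K$ be a skew field, $V$ a left (topological) $K$-vector space with basis $v^0,v^1,\ldots$, $V'$ the dual right $K$-vector space with basis $p_0,p_1,\ldots$, with pairing $(\cdot,\cdot)$; let $\mathbf f\in V$, $\mathbf g\in V'$, $y_i^k=(v^k,p_i)$, $f_i=(\mathbf f,p_i)$, $g^k=(v^k,\mathbf g)$, and assume $D=(y_i^k)$ generic. Then for pairwise distinct $i_0,\ldots,i_m$ and pairwise distinct $k_0,\ldots,k_m$: (a) $(\Delta_R^m f)_{i_0\ldots i_m}^{k_0\ldots k_m}=\sum_{j=0}^m f_{i_j}\big(|D_{i_0\ldots i_m}^{k_0\ldots k_m}|_j^m\big)^{-1}$; (b) $(\Delta_L^m g)_{i_0\ldots i_m}^{k_0\ldots k_m}=\sum_{l=0}^m\big(|D_{i_0\ldots i_m}^{k_0\ldots k_m}|_m^l\big)^{-1}g^{k_l}$.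
   Context: The pairing $(\cdot,\cdot):V\times V'\to K$ is biadditive with $(\lambda v,p\mu)=\lambda(v,p)\mu$. $D$ is the infinite matrix with entry $y_i^k$ in row $k$, column $i$. $D_{i_0\ldots i_m}^{k_0\ldots k_m}$ is the $(m+1)\times(m+1)$ matrix whose entry in row $l$ and column $j$ ($0\le l,j\le m$) is $y_{i_j}^{k_l}$. Quasideterminants: for a square matrix $M$ over $K$ with rows and columns indexed by $\{0,\ldots,n\}$, let $M_a^b$ denote its entry in row $b$, column $a$; the $(a,b)$-quasideterminant is $|M|_a^b=M_a^b-r\,(M^{(b,a)})^{-1}c$, where $M^{(b,a)}$ is $M$ with row $b$ and column $a$ deleted, $r$ is row $b$ of $M$ with its column-$a$ entry deleted, and $c$ is column $a$ of $M$ with its row-$b$ entry deleted (for $n=0$, $|M|_0^0=M_0^0$). In the commutative case $|M|_a^b=(-1)^{a+b}\det M/\det M^{(b,a)}$. Difference derivatives: extend $i_0,\ldots,i_m$ and $k_0,\ldots,k_m$ to permutations of $\{0,1,\ldots\}$; for generic $D$ there are unique upper triangular $A=(a_m^j)$ and lower triangular $C=(c_l^m)$ such that $q_m=\sum_{j=0}^m p_{i_j}a_m^j$, $w^m=\sum_{l=0}^m c_l^m v^{k_l}$ satisfy $(w^m,q_{m'})=0$ for $m\ne m'$ and $(w^m,p_{i_m})=(v^{k_m},q_m)=1$ (so $q_m$ is the unique right combination of $p_{i_0},\ldots,p_{i_m}$ with $(v^{k_l},q_m)=\delta_{lm}$ for $l\le m$, and $w^m$ the unique left combination of $v^{k_0},\ldots,v^{k_m}$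 with $(w^m,p_{i_j})=\delta_{jm}$ for $j\le m$). Define $(\Delta_R^m f)_{i_0\ldots i_m}^{k_0\ldots k_m}=\sum_{j} f_{i_j}a_m^j=(\mathbf f,q_m)$ and $(\Delta_L^m g)_{i_0\ldots i_m}^{k_0\ldots k_m}=\sum_l c_l^m g^{k_l}=(w^m,\mathbf g)$. Genericity means all finite square submatrices of $D$ and quasideterminants that need to be inverted are invertible. *)

From mathcomp Require Import all_boot all_order all_algebra.
From Stdlib Require Import ClassicalEpsilon.
Set Implicit Arguments. Unset Strict Implicit. Unset Printing Implicit Defensive.
Import GRing.Theory.
Local Open Scope ring_scope.

Definition skew_field (K : unitRingType) : Prop :=
  forall x : K, x != 0 -> x \is a GRing.unit.

Definition is_mxinv (K : unitRingType) n (M N : 'M[K]_n) : Prop :=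
  M *m N = 1%:M /\ N *m M = 1%:M.

Definition mx_invertible (K : unitRingType) n (M : 'M[K]_n) : Prop :=
  exists N, is_mxinv M N.

(* a (chosen) inverse; meaningful when M is invertible *)
Definition mxinv (K : unitRingType) n (M : 'M[K]_n) : 'M[K]_n :=
  epsilon (inhabits 0) (fun N => is_mxinv M N).

(* quasideterminant |M|_a^b : a = column index, b = row index.
   M_a^b = M b a ; r = row b without column a ; c = column a without row b. *)
Definition qdet (K : unitRingType) n (M : 'M[K]_n.+1) (a b : 'I_n.+1) : K :=
  M b a - (col' a (row b M) *m mxinv (row' b (col' a M)) *m row' b (col a M)) 0 0.

(* D_{i_0..i_m}^{k_0..k_m}: entry in row l, column j is y_{i_j}^{k_l};
   y i k stands for y_i^k = (v^k, p_i). *)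
Definition Dsub (K : unitRingType) (y : nat -> nat -> K) m
  (ii kk : 'I_m.+1 -> nat) : 'M[K]_m.+1 :=
  \matrix_(l, j) y (ii j) (kk l).

Definition generic (K : unitRingType) (y : nat -> nat -> K) : Prop :=
  forall m (ii kk : 'I_m.+1 -> nat), injective ii -> injective kk ->
    mx_invertible (Dsub y ii kk) /\
    forall a b, qdet (Dsub y ii kk) a b \is a GRing.unit.

(* coefficients a_m^j (j = 0..m): the (unique, for generic D) solution of
   (v^{k_l}, q_m) = sum_j y_{i_j}^{k_l} a_m^j = delta_{lm}, l = 0..m *)
Definition coefA (K : unitRingType) (y : nat -> nat -> K) m
  (ii kk : 'I_m.+1 -> nat) : 'cV[K]_m.+1 :=
  epsilon (inhabits 0) (fun A : 'cV[K]_m.+1 =>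
    Dsub y ii kk *m A = \col_(l < m.+1) (if l == ord_max then 1 else 0)).

(* coefficients c_l^m (l = 0..m): the (unique) solution of
   (w^m, p_{i_j}) = sum_l c_l^m y_{i_j}^{k_l} = delta_{jm}, j = 0..m *)
Definition coefC (K : unitRingType) (y : nat -> nat -> K) m
  (ii kk : 'I_m.+1 -> nat) : 'rV[K]_m.+1 :=
  epsilon (inhabits 0) (fun C : 'rV[K]_m.+1 =>
    C *m Dsub y ii kk = \row_(j < m.+1) (if j == ord_max then 1 else 0)).

(* (Delta_R^m f)_{i_0..i_m}^{k_0..k_m} = sum_j f_{i_j} a_m^j = (f, q_m) *)
Definition DeltaR (K : unitRingType) (y : nat -> nat -> K) (f : nat -> K) m
  (ii kk : 'I_m.+1 -> nat) : K :=
  \sum_(j < m.+1) f (ii j) * coefA y ii kk j 0.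

(* (Delta_L^m g)_{i_0..i_m}^{k_0..k_m} = sum_l c_l^m g^{k_l} = (w^m, g) *)
Definition DeltaL (K : unitRingType) (y : nat -> nat -> K) (g : nat -> K) m
  (ii kk : 'I_m.+1 -> nat) : K :=
  \sum_(l < m.+1) coefC y ii kk 0 l * g (kk l).

(** Genericity makes [D] invertible, say with two-sided inverse [N]. The
    equations defining [a_m] and [c^m] say that the column [a_m] is [N] times
    the last unit column and the row [c^m] is the last unit row times [N], so
    [a_m^j = N j m] and [c_l^m = N m l]. It remains to see that every entry of
    the inverse is an inverse quasideterminant, [N a b = (|D|_a^b)^-1]: split
    the column [b] of [D *m N = 1] into the entry at row [a] and the rest; the
    off-diagonal equations express the rest of that column of [N] through
    [N a b] via the minor of [D], and the diagonal equation then reads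
    [|D|_a^b * N a b = 1]. *)
From Pilot Require Import Defs.
From mathcomp Require Import all_boot all_order all_algebra.
From Stdlib Require Import ClassicalEpsilon.
Set Implicit Arguments. Unset Strict Implicit. Unset Printing Implicit Defensive.
Import GRing.Theory.
Local Open Scope ring_scope.

Lemma mulmx_coef_split (R : pzSemiRingType) m n p (a : 'I_n.+1)
    (A : 'M[R]_(m, n.+1)) (B : 'M[R]_(n.+1, p)) i j :
  (A *m B) i j = A i a * B a j + (col' a (row i A) *m row' a (col j B)) 0 0.
Proof.
rewrite !mxE (bigD1_ord a) //=; congr (_ + _).
by apply: eq_bigr => k _; rewrite !mxE.
Qed.

Lemma schur_mul_inv_coef (K : unitRingType) n (M N : 'M[K]_n.+1)
    (P : 'M[K]_n) (a b : 'I_n.+1) :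
  M *m N = 1%:M -> P *m row' b (col' a M) = 1%:M ->
  (M b a - (col' a (row b M) *m P *m row' b (col a M)) 0 0) * N a b = 1.
Proof.
move=> MN PM.
set s := N a b; set x : 'cV_n := row' a (col b N).
set r : 'rV_n := col' a (row b M); set c : 'cV_n := row' b (col a M).
have minor_eq : row' b (col' a M) *m x = - (c *m s%:M).
  apply/matrixP => l i; rewrite [i]ord1.
  have := congr1 (fun A : 'M_n.+1 => A (lift b l) b) MN.
  rewrite (mulmx_coef_split a) [RHS]mxE [lift b l == b]eq_sym (negbTE (neq_lift b l)).
  move=> /eqP; rewrite addrC addr_eq0 => /eqP.
  rewrite !mxE big_ord1 !mxE eqxx mulr1n => <-.
  by apply: eq_bigr => k _; rewrite !mxE.
have x_eq : x = - (P *m c *m s%:M).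
  by rewrite -[LHS]mul1mx -PM -[LHS]mulmxA minor_eq mulmxN mulmxA.
have := congr1 (fun A : 'M_n.+1 => A b b) MN.
rewrite (mulmx_coef_split a) [RHS]mxE eqxx mulr1n -/s -/x -/r => <-.
rewrite x_eq mulmxN !mulmxA mulrBl [in RHS]mxE; congr (_ - _).
by rewrite [RHS]mxE big_ord1 [s%:M _ _]mxE eqxx mulr1n.
Qed.

Lemma mxinvP (K : unitRingType) n (M : 'M[K]_n) :
  mx_invertible M -> is_mxinv M (mxinv M).
Proof. exact: epsilon_spec. Qed.

Lemma mxinv_coef_qdet (K : unitRingType) n (M N : 'M[K]_n.+1) (a b : 'I_n.+1) :
  is_mxinv M N -> mx_invertible (row' b (col' a M)) ->
  qdet M a b \is a GRing.unit -> N a b = (qdet M a b)^-1.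
Proof.
move=> [MN _] /mxinvP[_ PM] qM.
by rewrite -[N a b](mulKr qM) [qdet _ _ _ * _]schur_mul_inv_coef ?mulr1.
Qed.

Section GenericMinors.

Variables (K : unitRingType) (y : nat -> nat -> K).
Hypothesis y_generic : generic y.
Variables (m : nat) (ii kk : 'I_m.+1 -> nat).
Hypotheses (ii_inj : injective ii) (kk_inj : injective kk).

Local Notation D := (Dsub y ii kk).

Lemma Dsub_minor_invertible (a b : 'I_m.+1) :
  mx_invertible (row' b (col' a D)).
Proof.
case: m ii kk ii_inj kk_inj a b => [|n] ii' kk' ii'_inj kk'_inj a b.
  by exists 0; split; apply/matrixP => -[].
have -> : row' b (col' a (Dsub y ii' kk')) = Dsub y (ii' \o lift a) (kk' \o lift b).
  by apply/matrixP => l j; rewrite !mxE.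
exact: (y_generic (inj_comp ii'_inj (@lift_inj _ a)) (inj_comp kk'_inj (@lift_inj _ b))).1.
Qed.

Lemma Dsub_inv_coef N (a b : 'I_m.+1) :
  is_mxinv D N -> N a b = (qdet D a b)^-1.
Proof.
move=> DN; apply: mxinv_coef_qdet => //; first exact: Dsub_minor_invertible.
exact: (y_generic ii_inj kk_inj).2.
Qed.

Lemma coefA_col N : is_mxinv D N -> coefA y ii kk = col ord_max N.
Proof.
move=> [DN ND].
have e_delta : \col_(l < m.+1) (if l == ord_max then 1 else 0) =
               delta_mx ord_max 0 :> 'cV[K]_m.+1.
  by apply/matrixP => l i; rewrite [i]ord1 !mxE andbT; case: eqP.
rewrite colE /coefA e_delta.
set A := epsilon _ _.
have DA : D *m A = delta_mx ord_max 0.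
  apply: (epsilon_spec _ (fun A : 'cV[K]_m.+1 => D *m A = _)).
  by exists (N *m delta_mx ord_max 0); rewrite mulmxA DN mul1mx.
by rewrite -[A]mul1mx -ND -mulmxA DA.
Qed.

Lemma coefC_row N : is_mxinv D N -> Defs.coefC y ii kk = row ord_max N.
Proof.
move=> [DN ND].
have e_delta : \row_(j < m.+1) (if j == ord_max then 1 else 0) =
               delta_mx 0 ord_max :> 'rV[K]_m.+1.
  by apply/matrixP => i j; rewrite [i]ord1 !mxE; case: eqP.
rewrite rowE /Defs.coefC e_delta.
set C := epsilon _ _.
have CD : C *m D = delta_mx 0 ord_max.
  apply: (epsilon_spec _ (fun C : 'rV[K]_m.+1 => C *m D = _)).
  by exists (delta_mx 0 ord_max *m N); rewrite -mulmxA ND mulmx1.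
by rewrite -[C]mulmx1 -DN mulmxA CD.
Qed.

End GenericMinors.

Theorem theorem4 (K : unitRingType) (HK : skew_field K)
  (y : nat -> nat -> K) (f g : nat -> K) (Hgen : generic y)
  (m : nat) (ii kk : 'I_m.+1 -> nat)
  (Hii : injective ii) (Hkk : injective kk) :
  DeltaR y f ii kk =
    \sum_(j < m.+1) f (ii j) * (qdet (Dsub y ii kk) j ord_max)^-1
  /\
  DeltaL y g ii kk =
    \sum_(l < m.+1) (qdet (Dsub y ii kk) ord_max l)^-1 * g (kk l).
Proof.
have /mxinvP DN := (Hgen _ _ _ Hii Hkk).1.
split.
- rewrite /DeltaR (coefA_col DN); apply: eq_bigr => j _.
  by rewrite mxE (Dsub_inv_coef Hgen Hii Hkk _ _ DN).
- rewrite /DeltaL (coefC_row DN); apply: eq_bigr => l _.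
  by rewrite mxE (Dsub_inv_coef Hgen Hii Hkk _ _ DN).
Qed.
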